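(* Let $G$ be a $(2K_2, K_5-e)$-free graph. Then $\chi(G)\le\omega(G)+4$.
   Context: All graphs are finite, simple and undirected. $2K_2$ is the disjoint union of two edges; $K_5-e$ is the complete graph on 5 vertices minus one edge. A graph is $\mathcal F$-free if it has no induced subgraph isomorphic to a member of $\mathcal F$. $\chi$ is the chromatic number and $\omega$ the clique number. *)

From mathcomp Require Import all_boot.
Set Implicit Arguments. Unset Strict Implicit. Unset Printing Implicit Defensive.

Definition simple_graph (T : finType) (e : rel T) : Prop :=
  symmetric e /\ irreflexive e.

Definition has_induced_2K2 (T : finType) (e : rel T) : Prop :=
  exists a b c d : T,
    uniq [:: a; b; c; d] /\ e a b /\ e c d /\
    ~~ e a c /\ ~~ e a d /\ ~~ e b c /\ ~~ e b d.

Definition has_induced_K5_minus_e (T : finType) (e : rel T) : Prop :=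
  exists x : 'I_5 -> T,
    injective x /\ ~~ e (x ord0) (x (inord 1)) /\
    (forall i j : 'I_5, i != j ->
       ~~ ([set i; j] == [set ord0; inord 1]) -> e (x i) (x j)).

Definition is_clique (T : finType) (e : rel T) (A : {set T}) : bool :=
  [forall x in A, forall y in A, (x != y) ==> e x y].

Definition clique_number (T : finType) (e : rel T) : nat :=
  \max_(A : {set T} | is_clique e A) #|A|.

Definition colorable (T : finType) (e : rel T) (k : nat) : bool :=
  [exists f : {ffun T -> 'I_k}, forall x, forall y, e x y ==> (f x != f y)].

Lemma colorable_exists (T : finType) (e : rel T) :
  irreflexive e -> exists k, colorable e k.
Proof.
move=> irr; exists #|T|; apply/existsP; exists [ffun x => enum_rank x].
apply/forallP=> x; apply/forallP=> y; apply/implyP=> exy.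
rewrite !ffunE; apply/negP=> /eqP /enum_rank_inj exy'.
by subst y; rewrite irr in exy.
Qed.

Definition chromatic_number (T : finType) (e : rel T)
  (irr : irreflexive e) : nat := ex_minn (colorable_exists irr).

From mathcomp Require Import all_boot.
Set Implicit Arguments. Unset Strict Implicit. Unset Printing Implicit Defensive.

(* Fix a maximum clique q_0, ..., q_(w-1); by maximality every vertex misses some q_d.
   For i <> j the set M(i, j) of vertices missing both q_i and q_j is independent: an
   edge uv in it together with q_i q_j would be an induced 2K_2.  The vertices whose
   only non-neighbour in the clique is q_i are independent too: an edge uv among them
   together with the clique minus q_i would be a clique of size w + 1.  For w <= 3
   these w + 'C(w, 2) <= w + 3 sets cover the graph.  For w >= 4, a vertex outside the
   clique with three neighbours in it spans a K_5 - e with any non-neighbour q_d, so it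
   misses all but at most two clique vertices; hence it lies in some M(i, i + 1 mod w),
   in M(0, 2) or in M(1, 3).  The w + 2 independent sets {q_i} u M(i, i + 1 mod w),
   M(0, 2) and M(1, 3) then cover the graph. *)

Definition independent (T : finType) (e : rel T) (A : {set T}) : Prop :=
  {in A &, forall u v, ~~ e u v}.

Definition indexed_clique (T : finType) (e : rel T) (p : nat -> T) (n : nat) : Prop :=
  forall i j, i < n -> j < n -> i != j -> e (p i) (p j).

Lemma chromatic_number_le (T : finType) (e : rel T) (eirr : irreflexive e) k :
  colorable e k -> chromatic_number eirr <= k.
Proof. by rewrite /chromatic_number; case: ex_minnP => m _ /[apply]. Qed.

Lemma colorable_cover (T : finType) (e : rel T) (P : seq {set T}) k :
  {in P, forall A, independent e A} -> (forall v, exists2 A, A \in P & v \in A) ->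
  size P <= k -> colorable e k.
Proof.
move=> Pind Pcov Pk.
pose c v := find (fun A : {set T} => v \in A) P.
have P_has v : has (fun A : {set T} => v \in A) P.
  by case: (Pcov v) => A AP vA; apply/hasP; exists A.
have cP v : c v < size P by rewrite -has_find.
have c_in v : v \in nth set0 P (c v) := nth_find set0 (P_has v).
apply/existsP; exists [ffun v => Ordinal (leq_trans (cP v) Pk)].
apply/forallP=> x; apply/forallP=> y; apply/implyP=> exy; rewrite !ffunE.
apply/negP=> /eqP/(congr1 val)/= cxy.
have := Pind _ (mem_nth set0 (cP y)) x y; rewrite -{1}cxy => /(_ (c_in x) (c_in y)).
by rewrite exy.
Qed.

Lemma is_cliqueP (T : finType) (e : rel T) (A : {set T}) :
  reflect {in A &, forall x y, x != y -> e x y} (is_clique e A).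
Proof.
apply: (iffP forall_inP) => [H x y xA yA | H x xA].
  by have /forall_inP/(_ y yA)/implyP := H x xA.
by apply/forall_inP=> y yA; apply/implyP; apply: H.
Qed.

Lemma indexed_clique_le_clique_number (T : finType) (e : rel T) (p : nat -> T) n :
  irreflexive e -> indexed_clique e p n -> n <= clique_number e.
Proof.
move=> eirr pcl.
have p_inj : injective (fun i : 'I_n => p i).
  move=> i j pij; apply/val_inj/eqP; apply: contraFT (eirr (p i)) => ij.
  by rewrite {2}pij pcl.
have Acl : is_clique e [set p i | i : 'I_n].
  apply/is_cliqueP=> _ _ /imsetP[i _ ->] /imsetP[j _ ->] pij.
  by apply: pcl => //; apply: contraTneq pij => ->; rewrite eqxx.
rewrite -[n in n <= _]card_ord -(card_imset _ p_inj).
exact: (@leq_bigmax_cond _ (fun A : {set T} => is_clique e A) (fun A => #|A|) _ Acl).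
Qed.

Lemma exists_indexed_max_clique (T : finType) (e : rel T) (x0 : T) :
  exists p, indexed_clique e p (clique_number e).
Proof.
have [|A Acl cnA] := @eq_bigmax_cond _ (fun A : {set T} => is_clique e A) (fun A => #|A|).
  by apply/card_gt0P; exists set0; apply/is_cliqueP=> x y; rewrite inE.
have -> : clique_number e = #|A| := cnA.
exists (nth x0 (enum A)) => i j; rewrite cardE => ilt jlt ij.
move/is_cliqueP: Acl; apply; [rewrite -mem_enum; exact: mem_nth..|].
by rewrite nth_uniq ?enum_uniq.
Qed.

Lemma has_induced_K5_minus_eI (T : finType) (e : rel T) (x0 x1 x2 x3 x4 : T) :
  symmetric e -> uniq [:: x0; x1; x2; x3; x4] -> ~~ e x0 x1 ->
  e x0 x2 -> e x0 x3 -> e x0 x4 -> e x1 x2 -> e x1 x3 -> e x1 x4 ->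
  e x2 x3 -> e x2 x4 -> e x3 x4 -> has_induced_K5_minus_e e.
Proof.
move=> esym xuniq e01 e02 e03 e04 e12 e13 e14 e23 e24 e34.
pose x (i : 'I_5) := nth x0 [:: x0; x1; x2; x3; x4] i.
exists x; split; first by move=> i j /eqP; rewrite nth_uniq // => /eqP/val_inj.
split; first by rewrite /x inordK.
move=> i j ij nij.
have {nij} : ~~ [|| (i == 0 :> nat) && (j == 1 :> nat) | (i == 1 :> nat) && (j == 0 :> nat)].
  apply: contra nij => /orP[]/andP[/eqP i0 /eqP j1]; apply/eqP/setP=> k.
    by rewrite !inE -!val_eqE /= inordK // i0 j1.
  by rewrite !inE -!val_eqE /= inordK // i0 j1 orbC.
case: i j ij => [[|[|[|[|[|i]]]]] ?] [[|[|[|[|[|j]]]]] ?] //=;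
  by rewrite /x /=; first [done | rewrite esym].
Qed.

Lemma indexed_clique_extend (T : finType) (e : rel T) (p : nat -> T) n v :
  symmetric e -> indexed_clique e p n -> (forall k, k < n -> e v (p k)) ->
  indexed_clique e (fun i => if i == n then v else p i) n.+1.
Proof.
move=> esym pcl pv i j; rewrite !ltnS [i <= n]leq_eqVlt [j <= n]leq_eqVlt.
move=> /orP[/eqP-> | iw] /orP[/eqP-> | jw] ij; rewrite ?eqxx.
- by rewrite eqxx in ij.
- by rewrite (ltn_eqF jw) pv.
- by rewrite (ltn_eqF iw) esym pv.
- by rewrite (ltn_eqF iw) (ltn_eqF jw) pcl.
Qed.

Lemma indexed_clique_replace (T : finType) (e : rel T) (p : nat -> T) n i u :
  symmetric e -> indexed_clique e p n -> (forall k, k < n -> k != i -> e u (p k)) ->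
  indexed_clique e (fun j => if j == i then u else p j) n.
Proof.
move=> esym pcl pu j k jn kn jk.
case: (eqVneq j i) => [ji | ji]; case: (eqVneq k i) => [ki | ki] /=.
- by move: jk; rewrite ji ki eqxx.
- exact: pu.
- by rewrite esym pu.
- exact: pcl.
Qed.

Section MaximumCliqueCover.

Variables (T : finType) (e : rel T).
Hypotheses (esym : symmetric e) (eirr : irreflexive e).
Hypotheses (no2K2 : ~ has_induced_2K2 e) (noK5e : ~ has_induced_K5_minus_e e).
Variables (q : nat -> T) (w : nat).
Hypotheses (q_clique : indexed_clique e q w) (q_max : forall p, ~ indexed_clique e p w.+1).

Definition clique_vertices := [seq q i | i <- iota 0 w].

Definition missing i j : {set T} := [set v | ~~ e v (q i) & ~~ e v (q j)].

Definition missing_only i : {set T} :=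
  [set v | ~~ e v (q i) & all (fun j => (j == i) || e v (q j)) (iota 0 w)].

Lemma clique_vertex_eq i j : i < w -> j < w -> (q i == q j) = (i == j).
Proof.
move=> iw jw; case: (eqVneq i j) => [-> | ij]; first by rewrite !eqxx.
by apply/negbTE; apply: contraTneq (q_clique iw jw ij) => ->; rewrite eirr.
Qed.

Lemma exists_nonneighbour v : exists2 d, d < w & ~~ e v (q d).
Proof.
have [allN|/allPn[d]] := boolP (all (fun d => e v (q d)) (iota 0 w)); last first.
  by rewrite mem_iota => dw; exists d.
have vq k : k < w -> e v (q k) by move=> kw; apply: (allP allN); rewrite mem_iota.
by case: (q_max (indexed_clique_extend esym q_clique vq)).
Qed.

Lemma no_three_neighbours v a b c :
  v \notin clique_vertices -> a < w -> b < w -> c < w -> uniq [:: a; b; c] ->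
  e v (q a) -> e v (q b) -> e v (q c) -> False.
Proof.
move=> vQ aw bw cw abc va vb vc.
have [d dw vd] := exists_nonneighbour v.
have vq k : k < w -> v != q k.
  by move=> kw; apply: contraNneq vQ => ->; rewrite map_f ?mem_iota.
have dN k : e v (q k) -> d != k by apply: contraTneq => <-.
move: abc; rewrite /= !inE !negb_or => /and3P[/andP[ab ac] bc _].
apply: noK5e; apply: (@has_induced_K5_minus_eI _ _ v (q d) (q a) (q b) (q c)) => //;
  rewrite ?q_clique ?dN //.
by rewrite /= !inE !negb_or !vq ?clique_vertex_eq ?dN ?ab ?ac ?bc.
Qed.

Lemma missing_independent i j : i < w -> j < w -> i != j -> independent e (missing i j).
Proof.
move=> iw jw ij u v; rewrite !inE => /andP[ui uj] /andP[vi vj]; apply/negP=> uv.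
have outside x : ~~ e x (q i) -> ~~ e x (q j) -> x != q i /\ x != q j.
  move=> xi xj; split; [apply: contraNneq xj | apply: contraNneq xi] => ->.
    exact: q_clique.
  by rewrite esym q_clique // eq_sym.
have [[uqi uqj] [vqi vqj]] := (outside u ui uj, outside v vi vj).
have uv' : u != v by apply: contraTneq uv => ->; rewrite eirr.
apply: no2K2; exists u, v, (q i), (q j); do !split=> //; last exact: q_clique.
by rewrite /= !inE !negb_or uv' uqi uqj vqi vqj clique_vertex_eq // ij.
Qed.

Lemma missing_only_independent i : i < w -> independent e (missing_only i).
Proof.
move=> iw u v; rewrite !inE => /andP[_ /allP uQ] /andP[_ /allP vQ]; apply/negP=> uv.
have adj x : {in iota 0 w, forall j, (j == i) || e x (q j)} ->
    forall k, k < w -> k != i -> e x (q k).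
  by move=> xQ k kw ki; have := xQ k; rewrite mem_iota leq0n add0n kw (negbTE ki); apply.
have ucl := indexed_clique_replace esym q_clique (adj u uQ).
apply: (q_max (indexed_clique_extend (v := v) esym ucl _)) => k kw.
case: (eqVneq k i) => [_ | ki] /=; first by rewrite esym.
exact: adj v vQ k kw ki.
Qed.

Lemma colorable_small : w <= 3 -> colorable e (w + 3).
Proof.
move=> w3.
(* For w <= 3 these are all the pairs i < j < w. *)
pose pairs := [seq p <- [:: (0, 1); (0, 2); (1, 2)] | p.2 < w].
pose classes := [seq missing_only i | i <- iota 0 w] ++ [seq missing p.1 p.2 | p <- pairs].
have pair_in a b : a < b -> b < w -> missing a b \in classes.
  move=> ab bw; rewrite mem_cat; apply/orP; right; apply/mapP; exists (a, b) => //.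
  rewrite mem_filter /= bw.
  by case: a b ab bw => [|[|a]] [|[|[|b]]] //= _; rewrite ltnNge (leq_trans w3).
apply: (colorable_cover (P := classes)).
- move=> A; rewrite mem_cat => /orP[/mapP[i] | /mapP[[i j]]].
    by rewrite mem_iota => iw ->; apply: missing_only_independent.
  rewrite mem_filter /= => /andP[jw ij] ->.
  have lt_ij : i < j by move: ij; rewrite !inE => /or3P[]/eqP[-> ->].
  by apply: missing_independent; rewrite ?(ltn_trans lt_ij) ?ltn_eqF.
- move=> v; have [d dw vd] := exists_nonneighbour v.
  have [vonly | /allPn[j]] := boolP (all (fun j => (j == d) || e v (q j)) (iota 0 w)).
    exists (missing_only d); last by rewrite inE vd.
    by rewrite mem_cat map_f ?mem_iota.
  rewrite mem_iota negb_or => jw /andP[jd vj].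
  case: (ltngtP j d) jd => // jd _.
  + by exists (missing j d); rewrite ?pair_in ?inE ?vj.
  + by exists (missing d j); rewrite ?pair_in ?inE ?vd.
- by rewrite size_cat !size_map size_iota leq_add2l size_filter count_size.
Qed.

Lemma setU1_missing_independent i j :
  i < w -> j < w -> i != j -> independent e (q i |: missing i j).
Proof.
move=> iw jw ij u v; rewrite !in_setU1.
case/predU1P=> [-> | uM]; case/predU1P=> [-> | vM].
- by rewrite eirr.
- by move: vM; rewrite inE esym => /andP[].
- by move: uM; rewrite inE => /andP[].
- exact: missing_independent iw jw ij u v uM vM.
Qed.

Lemma missing_cyclic_pair v : 3 < w -> v \notin clique_vertices ->
  [\/ exists2 i, i < w & v \in missing i (i.+1 %% w), v \in missing 0 2 | v \in missing 1 3].
Proof.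
move=> w3 vQ; have w2 := ltnW w3.
have N3 a b c : a < b < c -> c < w -> e v (q a) -> e v (q b) -> e v (q c) -> False.
  move=> /andP[ab bc] cw; apply: no_three_neighbours;
    rewrite ?(ltn_trans ab) ?(ltn_trans bc) //.
  by rewrite /= !inE (ltn_eqF ab) (ltn_eqF bc) (ltn_eqF (ltn_trans ab bc)).
have consec i : i < 3 -> ~~ e v (q i) -> ~~ e v (q i.+1) ->
    [\/ exists2 i, i < w & v \in missing i (i.+1 %% w), v \in missing 0 2 | v \in missing 1 3].
  move=> i3 vi vi1; constructor 1; exists i; first exact: ltn_trans w3.
  by rewrite modn_small ?inE ?vi ?vi1 // (leq_ltn_trans i3 w3).
case v0: (e v (q 0)); case v1: (e v (q 1)); case v2: (e v (q 2)); case v3: (e v (q 3));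
  try by [exfalso; apply: (N3 0 1 2) | exfalso; apply: (N3 0 1 3)
         | exfalso; apply: (N3 0 2 3) | exfalso; apply: (N3 1 2 3)
         | apply: (consec 0); rewrite ?v0 ?v1 | apply: (consec 1); rewrite ?v1 ?v2
         | apply: (consec 2); rewrite ?v2 ?v3
         | constructor 2; rewrite inE v0 v2 | constructor 3; rewrite inE v1 v3].
(* v is adjacent to q_1 and q_2 only, so it misses q_3 and q_(4 mod w). *)
constructor 1; exists 3 => //; rewrite inE v3 /=.
have [-> | w_neq4] := eqVneq w 4; first by rewrite modnn v0.
have w4 : 4 < w by rewrite ltn_neqAle eq_sym w_neq4.
by rewrite modn_small //; apply/negP=> v4; apply: (N3 1 2 4).
Qed.

Lemma colorable_large : 3 < w -> colorable e (w + 2).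
Proof.
move=> w3.
have succ_lt i : i.+1 %% w < w by rewrite ltn_pmod // (ltn_trans _ w3).
have succ_neq i : i < w -> i != i.+1 %% w.
  move=> iw; case: (ltnP i.+1 w) => [i1w | wi]; first by rewrite modn_small // neq_ltn ltnSn.
  have iE : i.+1 = w by apply/eqP; rewrite eqn_leq iw wi.
  by move: w3; rewrite -iE modnn; case: i {iw wi iE}.
pose cyclic_classes := [seq q i |: missing i (i.+1 %% w) | i <- iota 0 w].
have cyclic_in i : i < w -> q i |: missing i (i.+1 %% w) \in cyclic_classes.
  by move=> iw; apply/mapP; exists i; rewrite ?mem_iota.
apply: (colorable_cover (P := cyclic_classes ++ [:: missing 0 2; missing 1 3])).
- move=> A; rewrite mem_cat => /orP[/mapP[i] | ].
    by rewrite mem_iota => iw ->; apply: setU1_missing_independent; rewrite ?succ_neq.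
  by rewrite !inE => /orP[]/eqP->; apply: missing_independent; rewrite // (leq_trans _ w3).
- move=> v; case: (boolP (v \in clique_vertices)) => [/mapP[k] | vQ].
    rewrite mem_iota => kw ->; exists (q k |: missing k (k.+1 %% w)); last exact: setU11.
    by rewrite mem_cat cyclic_in.
  case: (missing_cyclic_pair w3 vQ) => [[i iw vM] | v02 | v13].
  + exists (q i |: missing i (i.+1 %% w)); last by rewrite in_setU1 vM orbT.
    by rewrite mem_cat cyclic_in.
  + by exists (missing 0 2); rewrite // mem_cat !inE eqxx orbT.
  + by exists (missing 1 3); rewrite // mem_cat !inE eqxx !orbT.
- by rewrite size_cat size_map size_iota.
Qed.

End MaximumCliqueCover.

Theorem corollary3p10 (T : finType) (e : rel T)
  (esym : symmetric e) (eirr : irreflexive e) :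
  ~ has_induced_2K2 e -> ~ has_induced_K5_minus_e e ->
  chromatic_number eirr <= clique_number e + 4.
Proof.
move=> no2K2 noK5e.
case: (pickP (@predT T)) => [x0 _ | T0]; last first.
  have col0 : colorable e 0 by apply: (colorable_cover (P := [::])) => // v; have := T0 v.
  exact: leq_trans (chromatic_number_le eirr col0) (leq0n _).
have [q q_clique] := exists_indexed_max_clique e x0.
have q_max p : ~ indexed_clique e p (clique_number e).+1.
  by move/(indexed_clique_le_clique_number eirr); rewrite ltnn.
have [w3 | w4] := leqP (clique_number e) 3.
  have col := colorable_small esym eirr no2K2 q_clique q_max w3.
  by apply: leq_trans (chromatic_number_le eirr col) _; rewrite leq_add2l.
have col := colorable_large esym eirr no2K2 noK5e q_clique q_max w4.
by apply: leq_trans (chromatic_number_le eirr col) _; rewrite leq_add2l.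
Qed.
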